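(* Let $1<w\le 2$, $h>1$, $k\ge 2$, and let $\frac12\le y_1<\dots<y_n\le h-\frac12$ be uniformly spaced with $y_{i+1}-y_i=\frac1k$ for all $i$. Let $(\mathbf x,\prec)$ be a $\frac1k$-reasonable layout of this instance. For every bad square $s_i$ that is not a standard bad square, at least one of its neighbours $s_{i-1}$, $s_{i+1}$ (those that exist) is a standard bad square.
   Context: The instance is the strip $T=[0,w]\times[0,h]$ with the given $y_i$. A layout is a pair $(\mathbf x,\prec)$ where $\mathbf x=(x_1,\dots,x_n)$ with $x_i\in[\frac12,w-\frac12]$, and $\prec$ is a total order on the squares $s_1,\dots,s_n$, where $s_i$ is the closed axis-parallel unit square with centre $(x_i,y_i)$. If $s_i\prec s_j$ we say $s_j$ is in front of $s_i$ and $s_i$ is behind $s_j$. A point $p$ on the boundary of $s_i$ is visible if every square $s_j$ ($j\neq i$) containing $p$ is behind $s_i$, and covered otherwise. The visible perimeter of $s_i$ is the total length of its visible boundary points; the gap of $s_i$ is its visible perimeter minus $2$, the gap of a layout is the minimum gap of its squares, and a layout is $\varepsilon$-reasonable if its gap is larger than $\varepsilon$. A bad square is a square with at least two of its four corners covered; a standard bad square is a bad square one of whose vertical sides is entirely covered. *)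

From HB Require Import structures.
From mathcomp Require Import all_boot all_order all_algebra.
From mathcomp Require Import all_classical all_reals all_analysis.
Set Implicit Arguments. Unset Strict Implicit. Unset Printing Implicit Defensive.
Import Order.TTheory GRing.Theory Num.Theory.
Local Open Scope classical_set_scope.
Local Open Scope ring_scope.

Section Layouts.
Variables (R : realType) (n : nat).
(* centres: x i (chosen), y i (given); the total order is encoded by an
   injective rank function: s_i ≺ s_j  iff  rank i < rank j. *)
Variables (x y : 'I_n -> R) (rank : 'I_n -> nat).

Definition in_square (i : 'I_n) (p : R * R) : Prop :=
  `|p.1 - x i| <= 2^-1 /\ `|p.2 - y i| <= 2^-1.

Definition behind (i j : 'I_n) : Prop := (rank i < rank j)%N.

Definition visible (i : 'I_n) (p : R * R) : Prop :=
  forall j : 'I_n, j != i -> in_square j p -> behind j i.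

Definition covered (i : 'I_n) (p : R * R) : Prop := ~ visible i p.

Definition left_side  (i : 'I_n) (t : R) : R * R := (x i - 2^-1, y i - 2^-1 + t).
Definition right_side (i : 'I_n) (t : R) : R * R := (x i + 2^-1, y i - 2^-1 + t).
Definition bottom_side (i : 'I_n) (t : R) : R * R := (x i - 2^-1 + t, y i - 2^-1).
Definition top_side   (i : 'I_n) (t : R) : R * R := (x i - 2^-1 + t, y i + 2^-1).

Definition visible_length (side : R -> R * R) (i : 'I_n) : \bar R :=
  lebesgue_measure [set t : R | 0 <= t <= 1 /\ visible i (side t)].

Definition visible_perimeter (i : 'I_n) : \bar R :=
  (visible_length (left_side i) i + visible_length (right_side i) i +
   visible_length (bottom_side i) i + visible_length (top_side i) i)%E.

Definition gap (i : 'I_n) : \bar R := (visible_perimeter i - 2%:E)%E.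

(* the gap of the layout (minimum gap over all squares) is larger than eps *)
Definition reasonable (eps : R) : Prop :=
  forall i : 'I_n, (eps%:E < gap i)%E.

Definition corner (i : 'I_n) (c : 'I_4) : R * R :=
  (if (val c < 2)%N then x i - 2^-1 else x i + 2^-1,
   if odd (val c) then y i + 2^-1 else y i - 2^-1).

Definition bad_square (i : 'I_n) : Prop :=
  exists c1 c2 : 'I_4, c1 != c2 /\ covered i (corner i c1) /\ covered i (corner i c2).

Definition standard_bad_square (i : 'I_n) : Prop :=
  bad_square i /\
  ((forall t : R, 0 <= t <= 1 -> covered i (left_side i t)) \/
   (forall t : R, 0 <= t <= 1 -> covered i (right_side i t))).

End Layouts.

(* Let d = 1/k.  A square in front of s_i covering a top corner of s_i sits at
   most one unit above s_i, so s_{i+1}, at height y_i + d, exists.  Whenever a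
   square m has two squares in front of it, one at most and one at least as
   high as m and at most one unit apart, some vertical side of m is entirely
   covered: otherwise the visible parts of its four sides have total length at
   most 2, contradicting the positive gap.  Hence if s_{i+1} is behind s_i it
   is a standard bad square.  If instead s_{i+1} is in front of s_i and both
   top corners of s_i are covered, then the whole top side and all but a piece
   of length d of a vertical side of s_i are covered, so the gap of s_i is at
   most d.  The bottom corners are symmetric, and if a top and a bottom corner
   are covered with s_{i-1} and s_{i+1} both in front of s_i, the observation
   above makes s_i itself standard. *)

From HB Require Import structures.
From mathcomp Require Import all_boot all_order all_algebra.
From mathcomp Require Import all_classical all_reals all_analysis.
From mathcomp Require Import lra zify.
Import Order.TTheory GRing.Theory Num.Theory.
Set Implicit Arguments. Unset Strict Implicit. Unset Printing Implicit Defensive.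
Local Open Scope classical_set_scope.
Local Open Scope ring_scope.

Lemma lebesgue_measure_le_itv (R : realType) (A : set R) (a b : R) :
  a <= b -> A `<=` [set` `[a, b]] -> (lebesgue_measure A <= (b - a)%:E)%E.
Proof.
move=> ab sA.
have mono : (lebesgue_measure A <= lebesgue_measure [set` `[a, b]])%E :=
  le_outer_measure lebesgue_measure _ _ sA.
apply: (le_trans mono); rewrite lebesgue_measure_itv /= lte_fin.
by case: ltP => _; [rewrite -EFinB | rewrite lee_fin subr_ge0].
Qed.

Definition bottom_left : 'I_4 := @Ordinal 4 0 isT.
Definition top_left : 'I_4 := @Ordinal 4 1 isT.
Definition bottom_right : 'I_4 := @Ordinal 4 2 isT.
Definition top_right : 'I_4 := @Ordinal 4 3 isT.

Ltac square_arith :=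
  cbv [in_square left_side right_side bottom_side top_side corner
       bottom_left top_left bottom_right top_right];
  rewrite /= ?ler_norml; lra.

Section Layout.
Variables (R : realType) (n : nat) (x y : 'I_n -> R) (rank : 'I_n -> nat).

Lemma neq_of_rank_lt (i j : 'I_n) : (rank i < rank j)%N -> j != i.
Proof. by apply: contraTneq => ->; rewrite ltnn. Qed.

Lemma covered_by (i j : 'I_n) (p : R * R) :
  (rank i < rank j)%N -> in_square x y j p -> covered x y rank i p.
Proof.
move=> rij jp vis.
by have := ltn_trans rij (vis j (neq_of_rank_lt rij) jp); rewrite ltnn.
Qed.

Lemma covered_coverer (i : 'I_n) (p : R * R) : injective rank ->
  covered x y rank i p -> exists2 j, (rank i < rank j)%N & in_square x y j p.
Proof.
move=> rank_inj cov; apply: contrapT => no_coverer; apply: cov => j ji jp.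
case: (ltngtP (rank j) (rank i)) => // [rij | /rank_inj eji].
- by case: no_coverer; exists j.
- by rewrite eji eqxx in ji.
Qed.

Lemma top_corner_coverer_y (i j : 'I_n) (c : 'I_4) :
  odd c -> in_square x y j (corner x y i c) -> y i <= y j <= y i + 1.
Proof. by move=> oc; rewrite /in_square /corner oc /= !ler_norml => -[_]; lra. Qed.

Lemma bottom_corner_coverer_y (i j : 'I_n) (c : 'I_4) :
  ~~ odd c -> in_square x y j (corner x y i c) -> y i - 1 <= y j <= y i.
Proof.
by move=> /negbTE oc; rewrite /in_square /corner oc /= !ler_norml => -[_]; lra.
Qed.

Lemma bad_square_corners (i : 'I_n) : bad_square x y rank i ->
  [\/ covered x y rank i (corner x y i top_left) /\
      covered x y rank i (corner x y i top_right),
      covered x y rank i (corner x y i bottom_left) /\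
      covered x y rank i (corner x y i bottom_right) |
      exists c c' : 'I_4, [/\ odd c, ~~ odd c', covered x y rank i (corner x y i c)
                             & covered x y rank i (corner x y i c')]].
Proof.
case=> c1 [c2 [c12 [C1 C2]]].
case: c1 c12 C1 => [[|[|[|[|//]]]] p1]; case: c2 C2 => [[|[|[|[|//]]]] p2] C2 //= _ C1;
  solve [ by constructor 1 | by constructor 2
        | by constructor 3; exists (Ordinal p1), (Ordinal p2)
        | by constructor 3; exists (Ordinal p2), (Ordinal p1) ].
Qed.

Definition side_covered (side : R -> R * R) (i : 'I_n) :=
  forall t, 0 <= t <= 1 -> covered x y rank i (side t).

Definition vertical_side_covered (i : 'I_n) :=
  side_covered (left_side x y i) i \/ side_covered (right_side x y i) i.

Lemma standard_bad_square_of_vertical_side_covered (i : 'I_n) :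
  vertical_side_covered i -> standard_bad_square x y rank i.
Proof.
move=> cov; split=> //; case: cov => cov.
- exists bottom_left, top_left; split=> //.
  have -> : corner x y i bottom_left = left_side x y i 0 by congr pair; lra.
  have -> : corner x y i top_left = left_side x y i 1 by congr pair; lra.
  by split; apply: cov; lra.
- exists bottom_right, top_right; split=> //.
  have -> : corner x y i bottom_right = right_side x y i 0 by congr pair; lra.
  have -> : corner x y i top_right = right_side x y i 1 by congr pair; lra.
  by split; apply: cov; lra.
Qed.

Lemma visible_length_le1 side (i : 'I_n) :
  (visible_length x y rank side i <= 1%:E)%E.
Proof.
rewrite -[1]subr0; apply: lebesgue_measure_le_itv => // t [t01 _].
by rewrite /= in_itv.
Qed.

Lemma visible_length_le0 side (i : 'I_n) :
  side_covered side i -> (visible_length x y rank side i <= 0%:E)%E.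
Proof.
move=> cov; rewrite -[0]subr0; apply: lebesgue_measure_le_itv => // t [t01 vis].
by case: (cov t t01 vis).
Qed.

Lemma visible_length_le_above side (i j : 'I_n) (c : R) :
  (rank i < rank j)%N -> 0 <= c ->
  (forall t, 0 <= t <= 1 -> c < t -> in_square x y j (side t)) ->
  (visible_length x y rank side i <= c%:E)%E.
Proof.
move=> rij c0 cov; rewrite -[c]subr0; apply: lebesgue_measure_le_itv => // t [t01 vis].
have /andP[t0 _] := t01; rewrite /= in_itv /= t0 leNgt.
by apply/negP => ct; exact: covered_by rij (cov t t01 ct) vis.
Qed.

Lemma visible_length_le_below side (i j : 'I_n) (c : R) :
  (rank i < rank j)%N -> 0 <= c ->
  (forall t, 0 <= t <= 1 -> t < 1 - c -> in_square x y j (side t)) ->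
  (visible_length x y rank side i <= c%:E)%E.
Proof.
move=> rij c0 cov; have -> : c = 1 - (1 - c) by rewrite subKr.
apply: lebesgue_measure_le_itv => [|t [t01 vis]]; first lra.
have /andP[_ t1] := t01; rewrite /= in_itv /= t1 andbT leNgt.
by apply/negP => tc; exact: covered_by rij (cov t t01 tc) vis.
Qed.

Lemma side_covered_split side (i j1 j2 : 'I_n) (c : R) :
  (rank i < rank j1)%N -> (rank i < rank j2)%N ->
  (forall t, 0 <= t <= 1 -> t <= c -> in_square x y j1 (side t)) ->
  (forall t, 0 <= t <= 1 -> c < t -> in_square x y j2 (side t)) ->
  side_covered side i.
Proof.
move=> rij1 rij2 cov1 cov2 t t01.
have [tc | ct] := lerP t c.
- exact: covered_by rij1 (cov1 t t01 tc).
- exact: covered_by rij2 (cov2 t t01 ct).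
Qed.

Section Budget.
Variable eps : R.
Hypotheses (x_spread : forall a b, x a - x b <= 1) (eps_ge0 : 0 <= eps)
  (eps_le1 : eps <= 1) (rank_inj : injective rank)
  (layout_reasonable : reasonable x y rank eps).

Lemma visible_perimeter_budget (i : 'I_n) (lL lR lB lT : R) :
  (visible_length x y rank (left_side x y i) i <= lL%:E)%E ->
  (visible_length x y rank (right_side x y i) i <= lR%:E)%E ->
  (visible_length x y rank (bottom_side x y i) i <= lB%:E)%E ->
  (visible_length x y rank (top_side x y i) i <= lT%:E)%E ->
  lL + lR + lB + lT <= eps + 2 -> False.
Proof.
move=> hL hR hB hT; apply/negP; rewrite -ltNge.
have hP : (visible_perimeter x y rank i <= (lL + lR + lB + lT)%:E)%E.
  by rewrite !EFinD; do ![apply: leeD].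
have := lt_le_trans (layout_reasonable i) (leeB hP (lexx 2%:E)).
by rewrite -EFinB lte_fin; lra.
Qed.

Lemma vertical_side_covered_between (m l u : 'I_n) :
  (rank m < rank l)%N -> (rank m < rank u)%N ->
  y l <= y m <= y u -> y u - y l <= 1 -> vertical_side_covered m.
Proof.
move=> rml rmu /andP[ylm ymu] ylu.
have := x_spread l m; have := x_spread m l; have := x_spread u m;
have := x_spread m u; have := x_spread u l; have := x_spread l u.
(* [lra] does not see section hypotheses, hence [eps_ge0] is moved to the goal. *)
have := eps_ge0 => *.
have [xlm|xml] := lerP (x l) (x m); have [xum|xmu] := lerP (x u) (x m).
- by left; apply: (side_covered_split (c := 1 + y l - y m) rml rmu) => t t01 ht;
    square_arith.
(* In the mixed cases the visible lengths add up to (y u - y l) + |x u - x l|. *)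
- exfalso; apply: (visible_perimeter_budget
    (visible_length_le_below (c := y m - y l) rml _ _)
    (visible_length_le_above (c := y u - y m) rmu _ _)
    (visible_length_le_below (c := x m - x l) rml _ _)
    (visible_length_le_above (c := x u - x m) rmu _ _)); try lra;
    move=> t t01 ht; square_arith.
- exfalso; apply: (visible_perimeter_budget
    (visible_length_le_above (c := y u - y m) rmu _ _)
    (visible_length_le_below (c := y m - y l) rml _ _)
    (visible_length_le_above (c := x l - x m) rml _ _)
    (visible_length_le_below (c := x m - x u) rmu _ _)); try lra;
    move=> t t01 ht; square_arith.
- by right; apply: (side_covered_split (c := 1 + y l - y m) rml rmu) => t t01 ht;
    square_arith.
Qed.

Lemma top_corners_covered_contra (i m : 'I_n) :
  (rank i < rank m)%N -> y i <= y m <= y i + eps ->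
  covered x y rank i (corner x y i top_left) ->
  covered x y rank i (corner x y i top_right) -> False.
Proof.
move=> rim /andP[yim ymi] /(covered_coverer rank_inj)[jl rijl jl_tl]
  /(covered_coverer rank_inj)[jr rijr jr_tr].
have := x_spread m i; have := x_spread i m; have := x_spread jr m;
have := x_spread m jl; have := eps_le1 => *.
have [xmi|xim] := lerP (x m) (x i).
- apply: (visible_perimeter_budget
    (visible_length_le_above (c := y m - y i) rim _ _)
    (visible_length_le1 _ _) (visible_length_le1 _ _)
    (visible_length_le0 (side_covered_split (c := 1 + x m - x i) rim rijr _ _)));
    try lra; move=> t t01 ht; move: jl_tl jr_tr; square_arith.
- apply: (visible_perimeter_budget
    (visible_length_le1 _ _)
    (visible_length_le_above (c := y m - y i) rim _ _)
    (visible_length_le1 _ _)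
    (visible_length_le0 (side_covered_split (c := x m - x i) rijl rim _ _)));
    try lra; move=> t t01 ht; move: jl_tl jr_tr; square_arith.
Qed.

Lemma bottom_corners_covered_contra (i m : 'I_n) :
  (rank i < rank m)%N -> y i - eps <= y m <= y i ->
  covered x y rank i (corner x y i bottom_left) ->
  covered x y rank i (corner x y i bottom_right) -> False.
Proof.
move=> rim /andP[ymi yim] /(covered_coverer rank_inj)[jl rijl jl_bl]
  /(covered_coverer rank_inj)[jr rijr jr_br].
have := x_spread m i; have := x_spread i m; have := x_spread jr m;
have := x_spread m jl; have := eps_le1 => *.
have [xmi|xim] := lerP (x m) (x i).
- apply: (visible_perimeter_budget
    (visible_length_le_below (c := y i - y m) rim _ _)
    (visible_length_le1 _ _)
    (visible_length_le0 (side_covered_split (c := 1 + x m - x i) rim rijr _ _))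
    (visible_length_le1 _ _));
    try lra; move=> t t01 ht; move: jl_bl jr_br; square_arith.
- apply: (visible_perimeter_budget
    (visible_length_le1 _ _)
    (visible_length_le_below (c := y i - y m) rim _ _)
    (visible_length_le0 (side_covered_split (c := x m - x i) rijl rim _ _))
    (visible_length_le1 _ _));
    try lra; move=> t t01 ht; move: jl_bl jr_br; square_arith.
Qed.

End Budget.

Section Spacing.
Variable d : R.
Hypotheses (d_gt0 : 0 < d)
  (y_step : forall a b : 'I_n, val b = (val a).+1 -> y b - y a = d).

Lemma y_add_steps (a b : 'I_n) (p : nat) : val b = (val a + p)%N -> y b = y a + p%:R * d.
Proof.
elim: p b => [|p IH] b ab; first by rewrite addn0 in ab; rewrite (val_inj ab) mul0r addr0.
have lt_b : (val a + p < n)%N by rewrite (leq_trans _ (ltn_ord b)) // ab addnS.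
have := @y_step (Ordinal lt_b) b; rewrite ab addnS => /(_ erefl).
by rewrite (IH (Ordinal lt_b)) // -addn1 natrD mulrDl mul1r; lra.
Qed.

Lemma y_ltn (a b : 'I_n) : (val a < val b)%N -> y a < y b.
Proof.
move=> ab; rewrite (y_add_steps (esym (subnKC (ltnW ab)))) ltrDl.
by rewrite mulr_gt0 // ltr0n subn_gt0.
Qed.

Lemma y_leq (a b : 'I_n) : (val a <= val b)%N -> y a <= y b.
Proof. by rewrite leq_eqVlt => /orP[/eqP/val_inj -> // | /y_ltn/ltW]. Qed.

Lemma ltn_of_y_le (a b : 'I_n) : a != b -> y a <= y b -> (val a < val b)%N.
Proof.
move=> ab yab; rewrite ltn_neqAle val_eqE ab leqNgt /=.
by apply/negP => /y_ltn; rewrite ltNge yab.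
Qed.

Lemma upper_neighbour (i j : 'I_n) : j != i -> y i <= y j ->
  exists m : 'I_n, [/\ val m = (val i).+1, y m = y i + d & y m <= y j].
Proof.
move=> ji yij; rewrite eq_sym in ji; have ij := ltn_of_y_le ji yij.
have lt_m : ((val i).+1 < n)%N := leq_ltn_trans ij (ltn_ord j).
exists (Ordinal lt_m); split=> //; last exact: y_leq.
by have := @y_step i (Ordinal lt_m) erefl; lra.
Qed.

Lemma lower_neighbour (i j : 'I_n) : j != i -> y j <= y i ->
  exists m : 'I_n, [/\ (val m).+1 = val i, y m = y i - d & y j <= y m].
Proof.
move=> ji yji; have ji' := ltn_of_y_le ji yji.
have lt_m : ((val i).-1 < n)%N := leq_ltn_trans (leq_pred _) (ltn_ord i).
have vm : (val (Ordinal lt_m)).+1 = val i := prednK (leq_ltn_trans (leq0n _) ji').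
exists (Ordinal lt_m); split=> //; last by apply: y_leq; rewrite -ltnS vm.
by have := @y_step (Ordinal lt_m) i (esym vm); lra.
Qed.

End Spacing.

Section Neighbours.
Variable d : R.
Hypotheses (d_gt0 : 0 < d)
  (y_step : forall a b : 'I_n, val b = (val a).+1 -> y b - y a = d)
  (x_spread : forall a b, x a - x b <= 1) (rank_inj : injective rank)
  (layout_reasonable : reasonable x y rank d).

Lemma upper_neighbour_of_top_corner (i : 'I_n) (c : 'I_4) :
  odd c -> covered x y rank i (corner x y i c) ->
  exists m : 'I_n, [/\ val m = (val i).+1, y m = y i + d &
    standard_bad_square x y rank m \/ (rank i < rank m)%N].
Proof.
move=> oc /(covered_coverer rank_inj)[j rij /(top_corner_coverer_y oc)/andP[yij yji]].
have [m [vm ym ymj]] := upper_neighbour d_gt0 y_step (neq_of_rank_lt rij) yij.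
exists m; split=> //.
case: (ltngtP (rank m) (rank i)) => [rmi | rim | /rank_inj mi]; [left | by right |].
- apply: standard_bad_square_of_vertical_side_covered.
  apply: (vertical_side_covered_between x_spread (ltW d_gt0) layout_reasonable
    rmi (ltn_trans rmi rij)); move: d_gt0; lra.
- by rewrite mi in vm; lia.
Qed.

Lemma lower_neighbour_of_bottom_corner (i : 'I_n) (c : 'I_4) :
  ~~ odd c -> covered x y rank i (corner x y i c) ->
  exists m : 'I_n, [/\ (val m).+1 = val i, y m = y i - d &
    standard_bad_square x y rank m \/ (rank i < rank m)%N].
Proof.
move=> oc /(covered_coverer rank_inj)[j rij /(bottom_corner_coverer_y oc)/andP[yji yij]].
have [m [vm ym ymj]] := lower_neighbour d_gt0 y_step (neq_of_rank_lt rij) yij.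
exists m; split=> //.
case: (ltngtP (rank m) (rank i)) => [rmi | rim | /rank_inj mi]; [left | by right |].
- apply: standard_bad_square_of_vertical_side_covered.
  apply: (vertical_side_covered_between x_spread (ltW d_gt0) layout_reasonable
    (ltn_trans rmi rij) rmi); move: d_gt0; lra.
- by rewrite mi in vm; lia.
Qed.

End Neighbours.

End Layout.

Theorem lemma12 (R : realType) (w h : R) (k n : nat)
  (y x : 'I_n -> R) (rank : 'I_n -> nat) :
  1 < w <= 2 -> 1 < h -> (2 <= k)%N ->
  (forall i : 'I_n, 2^-1 <= y i <= h - 2^-1) ->
  (forall i j : 'I_n, val j = (val i).+1 -> y j - y i = k%:R^-1) ->
  (forall i : 'I_n, 2^-1 <= x i <= w - 2^-1) ->
  injective rank ->
  reasonable x y rank k%:R^-1 ->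
  forall i : 'I_n,
    bad_square x y rank i -> ~ standard_bad_square x y rank i ->
    exists j : 'I_n,
      ((val j).+1 = val i \/ val j = (val i).+1) /\ standard_bad_square x y rank j.
Proof.
move=> /andP[_ w_le2] _ k_ge2 _ y_step x_bounds rank_inj reas i bad not_std.
set d := k%:R^-1 in y_step reas.
have d_gt0 : 0 < d by rewrite invr_gt0 ltr0n; lia.
have d_le_half : d <= 2^-1 by rewrite lef_pV2 ?posrE ?ltr0n ?ler_nat //; lia.
have x_spread a b : x a - x b <= 1 by have := x_bounds a; have := x_bounds b; lra.
have d_ge0 := ltW d_gt0; have d_le1 : d <= 1 by lra.
have [[tl tr] | [bl br] | [c [c' [oc oc' C C']]]] := bad_square_corners bad.
- have [m [vm ym [std | rim]]] :=
    upper_neighbour_of_top_corner d_gt0 y_step x_spread rank_inj reas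
      (c := top_left) isT tl.
    by exists m; split; [right |].
  by case: (top_corners_covered_contra x_spread d_le1 rank_inj reas rim _ tl tr); lra.
- have [m [vm ym [std | rim]]] :=
    lower_neighbour_of_bottom_corner d_gt0 y_step x_spread rank_inj reas
      (c := bottom_left) isT bl.
    by exists m; split; [left |].
  by case: (bottom_corners_covered_contra x_spread d_le1 rank_inj reas rim _ bl br); lra.
- have [mu [vu yu [std | riu]]] :=
    upper_neighbour_of_top_corner d_gt0 y_step x_spread rank_inj reas oc C.
    by exists mu; split; [right |].
  have [md [vd yd [std | rid]]] :=
    lower_neighbour_of_bottom_corner d_gt0 y_step x_spread rank_inj reas oc' C'.
    by exists md; split; [left |].
  case: not_std; apply: standard_bad_square_of_vertical_side_covered.
  by apply: (vertical_side_covered_between x_spread d_ge0 reas rid riu); lra.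
Qed.
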